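(* Let $M$ be an $n\times n$ ($n\geq 2$) primitive Boolean matrix with Boolean rank $b(M)=b$. Then $$k(M)\leq \left\lceil\frac{(b-1)^2+1}{2}\right\rceil +1.$$
   Context: Boolean matrices are $(0,1)$-matrices with Boolean arithmetic ($1+1=1$). A square Boolean matrix $M$ is primitive if some power $M^r$ has all entries equal to $1$. The scrambling index $k(M)$ of a primitive matrix $M$ is the smallest positive integer $k$ such that any two rows of $M^k$ have a $1$ in a common position; equivalently, the smallest $k$ with $M^k(M^t)^k=J$ (the all-ones matrix). The Boolean rank $b(M)$ of an $m\times n$ nonzero Boolean matrix $M$ is the smallest positive integer $b$ such that $M=AB$ for some $m\times b$ Boolean matrix $A$ and $b\times n$ Boolean matrix $B$ (Boolean product). *)

From mathcomp Require Import all_boot.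
Set Implicit Arguments. Unset Strict Implicit. Unset Printing Implicit Defensive.

(* Boolean matrices: (0,1)-matrices represented as 'M[bool]_(m,n) is awkward
   since bool has no ring structure with 1+1=1; we use finite functions. *)
Definition bmat (m n : nat) := {ffun 'I_m -> 'I_n -> bool}.

Definition bmul (m p n : nat) (A : bmat m p) (B : bmat p n) : bmat m n :=
  [ffun i => fun j => [exists k : 'I_p, A i k && B k j]].

Definition bid (n : nat) : bmat n n := [ffun i => fun j => i == j].

Definition bpow (n : nat) (M : bmat n n) (k : nat) : bmat n n :=
  iter k (fun X => bmul X M) (bid n).

Definition all_ones (m n : nat) (A : bmat m n) : Prop := forall i j, A i j = true.

Definition primitive (n : nat) (M : bmat n n) : Prop :=
  exists r, all_ones (bpow M r).

Definition nonzero (m n : nat) (A : bmat m n) : Prop := exists i j, A i j = true.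

Definition rows_scrambled (n : nat) (A : bmat n n) : Prop :=
  forall i i' : 'I_n, exists j : 'I_n, A i j && A i' j.

Definition is_scrambling_index (n : nat) (M : bmat n n) (k : nat) : Prop :=
  0 < k /\ rows_scrambled (bpow M k) /\
  forall k', 0 < k' -> k' < k -> ~ rows_scrambled (bpow M k').

Definition bfactors (m n b : nat) (M : bmat m n) : Prop :=
  exists (A : bmat m b) (B : bmat b n), M = bmul A B.

Definition is_boolean_rank (m n : nat) (M : bmat m n) (b : nat) : Prop :=
  0 < b /\ bfactors b M /\ forall b', 0 < b' -> b' < b -> ~ bfactors b' M.

From mathcomp Require Import all_boot zify.
From Stdlib Require Import FunctionalExtensionality.
Set Implicit Arguments. Unset Strict Implicit. Unset Printing Implicit Defensive.

(* If M = AB with A of size n x b and B of size b x n, then a walk of length t + 1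
   in M factors as one arc of A, a walk of length t in the b x b matrix BA, and one
   arc of B.  For b minimal no row of B and no column of A vanishes, so BA is
   primitive and k(M) <= k(BA) + 1.  It remains to prove the Akelbek-Kirkland bound
   k(D) <= T := ceil(((m-1)^2 + 1)/2) for a primitive digraph D on m vertices.  Let
   s < m be its girth.  Every vertex reaches, in exactly m - s steps, a vertex y
   lying on a closed walk of length s, and the sets reached from y in r0, r0 + s,
   r0 + 2s, ... steps strictly grow until they are everything; hence each vertex
   reaches at least min(m, 1 + (T - (m - s)) / s) vertices in exactly T steps.  Two
   such sets of total size > m meet, which settles odd m, and even m unless
   s = m - 1.  In that last case the vertex off the shortest cycle yields closed
   walks of length s + 1 through every cycle vertex, so two cycle vertices at cyclic
   distance d <= m/2 - 1 both reach a common vertex in (m/2 - 1) m steps; as every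
   vertex has an out-neighbour on the cycle and T = 1 + (m/2 - 1) m, this suffices. *)

Lemma bmulE m p n (A : bmat m p) (B : bmat p n) i j :
  bmul A B i j = [exists k, A i k && B k j].
Proof. by rewrite /bmul ffunE. Qed.

Section Walks.
Variables (m : nat) (N : bmat m m).

Lemma bpow0 x y : bpow N 0 x y = (x == y).
Proof. by rewrite /bpow /= /bid ffunE. Qed.

Lemma bpowS t x y : bpow N t.+1 x y = [exists k, bpow N t x k && N k y].
Proof. by rewrite /bpow iterS -/(bpow N t) bmulE. Qed.

Lemma bpow1 x y : bpow N 1 x y = N x y.
Proof.
rewrite bpowS; apply/existsP/idP => [[k /andP[]]|Nxy].
  by rewrite bpow0 => /eqP->.
by exists x; rewrite bpow0 eqxx.
Qed.

Lemma bpowD a b x y :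
  bpow N (a + b) x y = [exists w, bpow N a x w && bpow N b w y].
Proof.
elim: b y => [|b IHb] y.
  rewrite addn0; apply/idP/existsP => [axy|[w /andP[axw]]].
    by exists y; rewrite axy bpow0 eqxx.
  by rewrite bpow0 => /eqP <-.
rewrite addnS bpowS; apply/existsP/existsP => [[k /andP[]]|[w /andP[axw]]].
  rewrite IHb => /existsP[w /andP[axw bwk]] Nky; exists w; rewrite axw /=.
  by rewrite bpowS; apply/existsP; exists k; rewrite bwk.
rewrite bpowS => /existsP[k /andP[bwk Nky]]; exists k; rewrite Nky andbT IHb.
by apply/existsP; exists w; rewrite axw.
Qed.

Lemma bpow_trans a b x w y :
  bpow N a x w -> bpow N b w y -> bpow N (a + b) x y.
Proof. by move=> axw bwy; rewrite bpowD; apply/existsP; exists w; rewrite axw. Qed.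

Lemma bpowDP a b x y :
  bpow N (a + b) x y -> exists2 w, bpow N a x w & bpow N b w y.
Proof. by rewrite bpowD => /existsP[w /andP[]]; exists w. Qed.

Lemma bpow_closedM k y : bpow N k y y -> forall j, bpow N (j * k) y y.
Proof.
move=> kyy; elim=> [|j IHj]; first by rewrite mul0n bpow0.
by rewrite mulSn; apply: bpow_trans kyy IHj.
Qed.

Lemma bpow_walk t x y : bpow N t x y ->
  exists f : nat -> 'I_m, [/\ f 0 = x, f t = y & forall i, i < t -> N (f i) (f i.+1)].
Proof.
elim: t y => [|t IHt] y.
  by rewrite bpow0 => /eqP <-; exists (fun _ => x); split.
rewrite bpowS => /existsP[k /andP[/IHt[f [f0 ft fN]] Nky]].
exists (fun i => if i == t.+1 then y else f i); split => //; first by rewrite eqxx.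
move=> i lt_i_t1; rewrite (ltn_eqF lt_i_t1) eqSS; case: eqP => [->|/eqP ne_it].
  by rewrite ft.
by apply: fN; rewrite ltn_neqAle ne_it -ltnS lt_i_t1.
Qed.

End Walks.

Definition out_set m (N : bmat m m) t u := [set w | bpow N t u w].
Definition closed_set m (N : bmat m m) s := [set y | bpow N s y y].

Lemma card_chain_growth (T : finType) (F : nat -> {set T}) K :
  (forall k, F k \subset F k.+1) ->
  (forall k, F k.+1 = F k -> F k.+2 = F k.+1) ->
  F K = setT -> forall k, minn #|T| (#|F 0| + k) <= #|F k|.
Proof.
move=> F_incr F_stable FK.
have stuck k : F k.+1 = F k -> forall j, F (k + j) = F k.
  move=> Fk; have Fkj j : F (k + j).+1 = F (k + j).
    by elim: j => [|j IHj]; rewrite ?addn0 // addnS F_stable.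
  by elim=> [|j IHj]; rewrite ?addn0 // addnS Fkj.
have F_mono k j : F k \subset F (k + j).
  elim: j => [|j IHj]; first by rewrite addn0.
  by rewrite addnS; apply: subset_trans IHj (F_incr _).
elim=> [|k IHk]; first by rewrite addn0 geq_minr.
have [Fk_full|Fk_part] := eqVneq (F k) setT.
  have -> : F k.+1 = setT by apply/eqP; rewrite eqEsubset subsetT -Fk_full F_incr.
  by rewrite cardsT geq_minl.
have grows : F k.+1 != F k.
  apply/eqP=> Fk; move/eqP: Fk_part; apply.
  have [le_kK|lt_Kk] := leqP k K.
    by have := stuck k Fk (K - k); rewrite subnKC // FK.
  apply/eqP; rewrite eqEsubset subsetT -FK.
  by have := F_mono K (k - K); rewrite subnKC // ltnW.
have proper_k : F k \proper F k.+1 by rewrite properEneq eq_sym grows F_incr.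
have := proper_card proper_k; lia.
Qed.

Lemma cards_meet (T : finType) (A B : {set T}) :
  #|T| < #|A| + #|B| -> exists x, (x \in A) && (x \in B).
Proof.
move=> big; case: (set_0Vmem (A :&: B)) => [AB0|[x]]; last by rewrite inE; exists x.
have := cardsUI A B; rewrite AB0 cards0 addn0.
have := subset_leq_card (subsetT (A :|: B)); rewrite cardsT; lia.
Qed.

Lemma out_sets_meet m (N : bmat m m) t u v :
  m < #|out_set N t u| + #|out_set N t v| -> exists w, bpow N t u w && bpow N t v w.
Proof. by rewrite -{1}[m]card_ord => /cards_meet[w]; rewrite !inE; exists w. Qed.

Definition scrambling_bound m := ((m.-1) ^ 2 + 1 + 1) %/ 2.

Lemma scrambling_bound_odd p : scrambling_bound p.*2.+1 = p * p * 2 + 1.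
Proof.
rewrite /scrambling_bound /= -[_ + 1 + 1](_ : (p * p * 2 + 1) * 2 = _).
  by rewrite mulnK.
rewrite -muln2; nia.
Qed.

Lemma scrambling_bound_even q : scrambling_bound q.+1.*2 = q * q * 2 + q * 2 + 1.
Proof.
rewrite /scrambling_bound doubleS /= -[_ + 1 + 1](_ : (q * q * 2 + q * 2 + 1) * 2 + 1 = _).
  by rewrite divnMDl // divn_small ?addn0.
rewrite -muln2; nia.
Qed.

Definition shortest_cycle m (N : bmat m m) s (c : nat -> 'I_m) :=
  [/\ 0 < s, (forall t y, 0 < t -> t < s -> ~~ bpow N t y y),
      (forall i, N (c i) (c i.+1)) & (forall i, c (i + s) = c i)].

Section Primitive.
Variables (m : nat) (N : bmat m m) (r : nat).
Hypotheses (r_gt0 : 0 < r) (N_full : all_ones (bpow N r)).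

Lemma out_neighbor x : exists y, N x y.
Proof.
by have := N_full x x; rewrite -(subnKC r_gt0) => /bpowDP[y]; rewrite bpow1; exists y.
Qed.

Lemma in_neighbor y : exists x, N x y.
Proof.
by have := N_full y y; rewrite -(subnK r_gt0) => /bpowDP[x _]; rewrite bpow1; exists x.
Qed.

Lemma bpow_out t x : exists y, bpow N t x y.
Proof.
elim: t x => [|t IHt] x; first by exists x; rewrite bpow0.
have [y txy] := IHt x; have [z Nyz] := out_neighbor y.
by exists z; rewrite -addn1; apply: bpow_trans txy _; rewrite bpow1.
Qed.

Lemma bpow_full t : r <= t -> all_ones (bpow N t).
Proof.
move=> le_rt x y; have [w txw] := bpow_out (t - r) x.
by rewrite -(subnK le_rt); apply: bpow_trans txw (N_full _ _).
Qed.

Lemma no_mod_potential (x : 'I_m) q (phi : 'I_m -> nat) : 1 < q ->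
  (forall a b, N a b -> phi b = (phi a).+1 %[mod q]) -> False.
Proof.
move=> q_gt1 phiS.
have phi_walk t a b : bpow N t a b -> phi b = phi a + t %[mod q].
  elim: t b => [|t IHt] b; first by rewrite bpow0 addn0 => /eqP->.
  rewrite bpowS => /existsP[k /andP[/IHt tak /phiS Nkb]].
  by rewrite Nkb -addn1 -modnDml tak modnDml addn1 addnS.
have le_r : r <= r * q + 1 by nia.
have := phi_walk _ x x (bpow_full le_r x x).
rewrite (addnC (r * q)) addnA -modnDmr modnMl addn0 => /eqP.
by rewrite -{1}[phi x]addn0 eqn_modDl mod0n (modn_small q_gt1).
Qed.

Lemma exists_shortest_cycle (x : 'I_m) : exists s c, shortest_cycle N s c.
Proof.
have has_closed : exists s, (0 < s) && [exists x, bpow N s x x].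
  by exists r; rewrite r_gt0; apply/existsP; exists x; apply: N_full.
case: (ex_minnP has_closed) => s /andP[s_gt0 /existsP[y syy]] s_min.
have [f [f0 fs fN]] := bpow_walk syy.
exists s, (fun i => f (i %% s)); split => //.
- move=> t z t_gt0 lt_ts; apply/negP=> tzz.
  have : (0 < t) && [exists x, bpow N t x x] by rewrite t_gt0; apply/existsP; exists z.
  by move/s_min; rewrite leqNgt lt_ts.
- move=> i; rewrite -addn1 -modnDml addn1.
  have lt_is : i %% s < s by rewrite ltn_pmod.
  case: (ltnP (i %% s).+1 s) => [lt_i1s|le_si1]; first by rewrite (modn_small lt_i1s); apply: fN.
  have si1 : (i %% s).+1 = s by apply/eqP; rewrite eqn_leq le_si1 lt_is.
  by rewrite si1 modnn f0 -fs -{2}si1; apply: fN.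
- by move=> i; rewrite modnDr.
Qed.

(* The sets reached from y in r0, r0 + s, r0 + 2s, ... steps grow with each turn
   around the closed walk at y until they fill everything. *)
Lemma card_out_set_ge s u y d T : 0 < s ->
  bpow N d u y -> bpow N s y y -> d <= T ->
  minn m (1 + (T - d) %/ s) <= #|out_set N T u|.
Proof.
move=> s_gt0 duy syy le_dT.
set r0 := (T - d) %% s; set k0 := (T - d) %/ s.
set F := fun k => out_set N (k * s + r0) y.
have FS k : F k.+1 = [set w | [exists v, (v \in F k) && bpow N s v w]].
  apply/setP=> w; rewrite !inE mulSn -addnA addnC; apply/idP/existsP.
    by move/bpowDP=> [v kyv svw]; exists v; rewrite inE kyv.
  by case=> v /andP[]; rewrite inE; apply: bpow_trans.
have F0 : 1 <= #|F 0|.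
  have [w r0yw] := bpow_out (0 * s + r0) y.
  by rewrite card_gt0; apply/set0Pn; exists w; rewrite inE.
have grow : minn m (#|F 0| + k0) <= #|F k0|.
  rewrite -{1}[m]card_ord; apply: (card_chain_growth (K := r)).
  - move=> k; apply/subsetP=> w; rewrite !inE => kyw.
    by rewrite mulSn -addnA; apply: bpow_trans syy kyw.
  - by move=> k Fk; rewrite FS Fk -FS.
  - by apply/setP=> w; rewrite !inE; apply: bpow_full; nia.
apply: leq_trans (_ : #|F k0| <= _).
  by apply: leq_trans grow; rewrite leq_min geq_minl /= geq_min leq_add2r F0 orbT.
apply: subset_leq_card; apply/subsetP=> w; rewrite !inE => k0yw.
rewrite -(subnKC le_dT) (divn_eq (T - d) s); apply: bpow_trans duy k0yw.
Qed.

Section ShortestCycle.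
Variables (s : nat) (c : nat -> 'I_m).
Hypotheses (s_gt0 : 0 < s) (s_min : forall t y, 0 < t -> t < s -> ~~ bpow N t y y).
Hypotheses (c_step : forall i, N (c i) (c i.+1)) (c_periodic : forall i, c (i + s) = c i).

Lemma cycle_walk i k : bpow N k (c i) (c (i + k)).
Proof.
elim: k => [|k IHk]; first by rewrite addn0 bpow0.
by rewrite addnS -addn1; apply: bpow_trans IHk _; rewrite bpow1.
Qed.

Lemma cycle_closed i : bpow N s (c i) (c i).
Proof. by have := cycle_walk i s; rewrite c_periodic. Qed.

Lemma cycle_mod i : c i = c (i %% s).
Proof.
rewrite {1}(divn_eq i s); elim: (i %/ s) => [|q IHq]; first by rewrite mul0n add0n.
by rewrite mulSn -addnA addnC c_periodic.
Qed.

Lemma cycle_eq i j : i %% s = j %% s -> c i = c j.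
Proof. by move=> ij; rewrite cycle_mod ij -cycle_mod. Qed.

Lemma cycle_inj i j : i < s -> j < s -> c i = c j -> i = j.
Proof.
wlog le_ij : i j / i <= j => [W lt_is lt_js cij|lt_is lt_js cij].
  by case: (leqP i j) => [|/ltnW] ?; [apply: W | symmetry; apply: W].
have := cycle_walk i (j - i); rewrite subnKC // -cij => closed_ji.
apply/eqP; rewrite eqn_leq le_ij leqNgt; apply/negP=> lt_ij.
have lt_jis : j - i < s by apply: leq_ltn_trans (leq_subr _ _) lt_js.
by have := s_min (c i) (_ : 0 < j - i) lt_jis; rewrite closed_ji subn_gt0 => /(_ lt_ij).
Qed.

Lemma cycle_back i j :
  exists l, [/\ bpow N l (c j) (c i), l < s & (i %% s + s - l) %% s = j %% s].
Proof.
set i' := i %% s; set j' := j %% s.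
have lt_is : i' < s by rewrite ltn_pmod.
have lt_js : j' < s by rewrite ltn_pmod.
rewrite (cycle_mod j) (cycle_mod i) -/i' -/j'.
case: (leqP j' i') => [le_ji|lt_ij].
  exists (i' - j'); split.
  + by have := cycle_walk j' (i' - j'); rewrite subnKC.
  + by apply: leq_ltn_trans (leq_subr _ _) lt_is.
  + have -> : i' + s - (i' - j') = j' + s by lia.
    by rewrite modnDr modn_small.
exists (i' + s - j'); split.
+ by have := cycle_walk j' (i' + s - j'); rewrite subnKC ?c_periodic //; lia.
+ lia.
+ have -> : i' + s - (i' + s - j') = j' by lia.
  by rewrite modn_small.
Qed.

Lemma cycle_forward t i j : 0 < t -> bpow N t (c i) (c j) ->
  exists k, [/\ 0 < k, k <= t & j %% s = (i + k) %% s].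
Proof.
move=> t_gt0 tij; have [l [lji lt_ls back]] := cycle_back i j.
have closed_i : bpow N (t + l) (c i) (c i) by apply: bpow_trans tij lji.
have le_s_tl : s <= t + l.
  rewrite leqNgt; apply/negP=> lt_tl_s.
  by have := s_min (c i) (_ : 0 < t + l) lt_tl_s; rewrite closed_i addn_gt0 t_gt0 => /(_ isT).
exists (s - l); split; first by rewrite subn_gt0.
  by rewrite leq_subLR addnC.
by rewrite -back -modnDml addnBA // ltnW.
Qed.

Lemma cycle_arc i j : N (c i) (c j) -> j %% s = i.+1 %% s.
Proof.
rewrite -bpow1 => Nij; have [k [k_gt0 le_k1 ->]] := @cycle_forward 1 i j isT Nij.
have -> : k = 1 by apply/eqP; rewrite eqn_leq le_k1 k_gt0.
by rewrite addn1.
Qed.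

Definition cycle_set := [set c i | i : 'I_s].

Definition cycle_index (w : 'I_m) : nat :=
  if [pick k : 'I_s | c k == w] is Some k then val k else 0.

Lemma cycle_indexK k : k < s -> cycle_index (c k) = k.
Proof.
move=> lt_ks; rewrite /cycle_index; case: pickP => [k' /eqP ck'|none].
  exact: cycle_inj (ltn_ord k') lt_ks ck'.
by have := none (Ordinal lt_ks); rewrite eqxx.
Qed.

Lemma cycle_indexP w : w \in cycle_set -> cycle_index w < s /\ c (cycle_index w) = w.
Proof. by case/imsetP=> i _ ->; rewrite (cycle_indexK (ltn_ord i)). Qed.

Lemma mem_cycle_set i : c i \in cycle_set.
Proof. by rewrite cycle_mod; apply/imsetP; exists (Ordinal (ltn_pmod i s_gt0)). Qed.

Lemma card_cycle_set : #|cycle_set| = s.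
Proof.
have c_inj : injective (fun i : 'I_s => c i).
  by move=> i j /(cycle_inj (ltn_ord i) (ltn_ord j)) /val_inj.
by rewrite card_imset // card_ord.
Qed.

Lemma cycle_length_le : s <= m.
Proof. by rewrite -card_cycle_set; apply: leq_trans (max_card _) _; rewrite card_ord. Qed.

Lemma card_closed_set : s <= #|closed_set N s|.
Proof.
rewrite -{1}card_cycle_set; apply: subset_leq_card.
by apply/subsetP=> y /imsetP[i _ ->]; rewrite inE cycle_closed.
Qed.

(* The cycle index would otherwise be a potential modulo s. *)
Lemma cycle_length_lt : 1 < m -> s < m.
Proof.
move=> m_gt1; rewrite ltn_neqAle cycle_length_le andbT; apply/eqP=> s_eq_m.
have cycle_setT : cycle_set = setT.
  by apply/eqP; rewrite eqEcard subsetT cardsT card_ord card_cycle_set s_eq_m leqnn.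
have indexP w : cycle_index w < s /\ c (cycle_index w) = w.
  by apply: cycle_indexP; rewrite cycle_setT inE.
apply: (@no_mod_potential (c 0) s cycle_index); first by rewrite s_eq_m.
move=> a b Nab; have [_ ca] := indexP a; have [_ cb] := indexP b.
by apply: cycle_arc; rewrite ca cb.
Qed.

Definition reach_set t (A : {set 'I_m}) := [set u | [exists w in A, bpow N t u w]].

Lemma closed_set_succ y : y \in closed_set N s ->
  exists2 y', N y y' & y' \in closed_set N s.
Proof.
rewrite inE => syy; move: (syy); rewrite -{1}(subnKC s_gt0) => /bpowDP[y' Nyy' sy'y].
exists y'; first by rewrite -bpow1.
by rewrite inE -(subnK s_gt0); apply: bpow_trans sy'y Nyy'.
Qed.

(* The sets of vertices reaching the closed set in t steps grow with t (every
   vertex of the closed set has a successor in it) until they fill everything. *)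
Lemma card_reach_closed_set t : minn m (s + t) <= #|reach_set t (closed_set N s)|.
Proof.
set F := fun t => reach_set t (closed_set N s).
have FS k : F k.+1 = [set u | [exists v, N u v && (v \in F k)]].
  apply/setP=> u; rewrite !inE; apply/existsP/existsP.
    case=> w /andP[Zw]; rewrite -add1n => /bpowDP[v Nuv kvw].
    by exists v; rewrite -bpow1 Nuv inE; apply/existsP; exists w; rewrite Zw.
  case=> v /andP[Nuv]; rewrite inE => /existsP[w /andP[Zw kvw]].
  by exists w; rewrite Zw -add1n; apply: bpow_trans kvw; rewrite bpow1.
have F0 : s <= #|F 0|.
  apply: leq_trans card_closed_set _; apply: subset_leq_card; apply/subsetP=> y Zy.
  by rewrite inE; apply/existsP; exists y; rewrite Zy bpow0 eqxx.
have grow : minn m (#|F 0| + t) <= #|F t|.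
  rewrite -{1}[m]card_ord; apply: (card_chain_growth (K := r)).
  - move=> k; apply/subsetP=> u; rewrite !inE => /existsP[w /andP[Zw kuw]].
    have [w' Nww' Zw'] := closed_set_succ Zw.
    by apply/existsP; exists w'; rewrite Zw' -addn1; apply: bpow_trans kuw _; rewrite bpow1.
  - by move=> k Fk; rewrite FS Fk -FS.
  - apply/setP=> u; rewrite !inE; apply/existsP; exists (c 0).
    by rewrite inE cycle_closed N_full.
by apply: leq_trans grow; rewrite leq_min geq_minl /= geq_min leq_add2r F0 orbT.
Qed.

Lemma reach_closed_setT : reach_set (m - s) (closed_set N s) = setT.
Proof.
apply/eqP; rewrite eqEcard subsetT cardsT card_ord.
by have := card_reach_closed_set (m - s); rewrite subnKC ?cycle_length_le // minnn.
Qed.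

Lemma card_out_set_reach T d w : w \in reach_set d (closed_set N s) -> d <= T ->
  minn m (1 + (T - d) %/ s) <= #|out_set N T w|.
Proof.
rewrite inE => /existsP[y /andP[Zy dwy]] le_dT.
by apply: card_out_set_ge s_gt0 dwy _ le_dT; rewrite inE in Zy.
Qed.

Lemma card_out_set_odd p w : 1 < m -> m = p.*2.+1 ->
  p.+1 <= #|out_set N (scrambling_bound m) w|.
Proof.
move=> m_gt1 m_odd; have lt_sm := cycle_length_lt m_gt1.
have w_reach : w \in reach_set (m - s) (closed_set N s) by rewrite reach_closed_setT inE.
have -> : scrambling_bound m = p * p * 2 + 1 by rewrite m_odd scrambling_bound_odd.
rewrite -mul2n -addn1 in m_odd.
apply: leq_trans (card_out_set_reach w_reach _); last by nia.
have : p <= (p * p * 2 + 1 - (m - s)) %/ s by rewrite leq_divRL //; nia.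
lia.
Qed.

Lemma card_out_set_even q w : m = q.+1.*2 ->
  q.+1 <= #|out_set N (scrambling_bound m) w|.
Proof.
move=> m_even; have lt_sm : s < m by apply: cycle_length_lt; rewrite m_even.
have w_reach : w \in reach_set (m - s) (closed_set N s) by rewrite reach_closed_setT inE.
have -> : scrambling_bound m = q * q * 2 + q * 2 + 1 by rewrite m_even scrambling_bound_even.
rewrite -mul2n in m_even.
apply: leq_trans (card_out_set_reach w_reach _); last by nia.
have : q <= (q * q * 2 + q * 2 + 1 - (m - s)) %/ s by rewrite leq_divRL //; nia.
lia.
Qed.

Lemma card_out_set_even_reach q w : m = q.+1.*2 -> s < m.-1 ->
  w \in reach_set (m - s - 1) (closed_set N s) ->
  q.+2 <= #|out_set N (scrambling_bound m) w|.
Proof.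
move=> m_even lt_sm1 w_reach.
have -> : scrambling_bound m = q * q * 2 + q * 2 + 1 by rewrite m_even scrambling_bound_even.
rewrite -mul2n in m_even.
apply: leq_trans (card_out_set_reach w_reach _); last by nia.
have : q.+1 <= (q * q * 2 + q * 2 + 1 - (m - s - 1)) %/ s by rewrite leq_divRL //; nia.
lia.
Qed.

Lemma card_reach_closed_set_pred : m.-1 <= #|reach_set (m - s - 1) (closed_set N s)|.
Proof.
apply: leq_trans (card_reach_closed_set _); have := cycle_length_le; lia.
Qed.

(* One of u, v reaches the closed set in m - s - 1 steps, since at most one vertex does not. *)
Lemma even_out_sets_meet q u v : m = q.+1.*2 -> s < m.-1 -> u != v ->
  exists w, bpow N (scrambling_bound m) u w && bpow N (scrambling_bound m) v w.
Proof.
move=> m_even lt_sm1 neq_uv; set A := reach_set (m - s - 1) (closed_set N s).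
have even_size := card_out_set_even _ m_even.
have even_reach_size := card_out_set_even_reach m_even lt_sm1.
case: (boolP (u \in A)) => [uA|uNA].
  by apply: out_sets_meet; have := even_reach_size u uA; have := even_size v; lia.
case: (boolP (v \in A)) => [vA|vNA].
  by apply: out_sets_meet; have := even_reach_size v vA; have := even_size u; lia.
have : A \subset ~: [set u; v].
  apply/subsetP=> x xA; rewrite !inE negb_or.
  by apply/andP; split; [move: uNA | move: vNA]; apply: contraNneq => <-.
move/subset_leq_card; have := cardsC [set u; v]; rewrite cards2 neq_uv card_ord.
have := card_reach_closed_set_pred; rewrite -/A; lia.
Qed.

Lemma off_cycle_out_neighbor z : z \notin cycle_set -> exists2 y, N z y & y != z.
Proof.
move=> zNC; case: (boolP [exists y, N z y && (y != z)]) => [/existsP[y /andP[]]|/existsPn].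
  by exists y.
move=> loop_only; have stay t y : bpow N t z y -> y = z.
  elim: t y => [|t IHt] y; first by rewrite bpow0 => /eqP.
  rewrite bpowS => /existsP[k /andP[/IHt -> Nzy]].
  by apply/eqP; have := loop_only y; rewrite Nzy /= negbK eq_sym.
by move: zNC; rewrite -(stay r (c 0) (N_full _ _)) mem_cycle_set.
Qed.

Lemma cycle_two_step i j : bpow N 2 (c i) (c j) ->
  j %% s = i.+1 %% s \/ j %% s = i.+2 %% s.
Proof.
case/(cycle_forward (isT : 0 < 2))=> -[|[|[|k]]] [] //= _ _ ->.
  by left; rewrite addn1.
by right; rewrite addn2.
Qed.

(* Without such a detour through z, the cycle index extended by phi z := (index of an
   in-neighbour of z) + 1 would be a potential modulo s. *)
Lemma cycle_detour z : 2 < s -> (forall w, w \notin cycle_set -> w = z) ->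
  z \notin cycle_set -> exists i, N (c i) z && N z (c i.+1).
Proof.
move=> s_gt2 off_z zNC.
case: (boolP [exists i : 'I_s, N (c i) z && N z (c i.+1)]) => [/existsP[i]|/existsPn no_detour].
  by exists i.
exfalso.
have on_cycle w : w != z -> w \in cycle_set by apply: contraR => /off_z ->.
have indexP w : w != z -> cycle_index w < s /\ c (cycle_index w) = w.
  by move/on_cycle/cycle_indexP.
have no_loop : ~~ N z z by rewrite -bpow1 s_min // ltnW.
have via_z i j : N (c i) z -> N z (c j) -> j %% s = i.+2 %% s.
  move=> Niz Nzj; have N2 : bpow N 2 (c i) (c j) by apply: (@bpow_trans _ _ 1 1 _ z); rewrite bpow1.
  have [ji1|//] := cycle_two_step N2.
  have ci : c (i %% s) = c i by apply: cycle_eq; rewrite modn_mod.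
  have cj : c (i %% s).+1 = c j by apply: cycle_eq; rewrite ji1 -addn1 modnDml addn1.
  by have := no_detour (Ordinal (ltn_pmod i s_gt0)); rewrite /= ci cj Niz Nzj.
have [x Nxz] := in_neighbor z.
have neq_xz : x != z by apply: contraNneq _ no_loop => xz; rewrite -{1}xz.
have [y Nzy neq_yz] := off_cycle_out_neighbor zNC.
have [_ cx] := indexP x neq_xz; have [_ cy] := indexP y neq_yz.
rewrite -cx in Nxz; rewrite -cy in Nzy.
set phi := fun w => if w == z then (cycle_index x).+1 else cycle_index w.
apply: (@no_mod_potential z s phi); first exact: ltn_trans s_gt2.
move=> a b Nab; rewrite /phi.
case: (eqVneq a z) => [az|neq_az]; case: (eqVneq b z) => [bz|neq_bz].
- by move: no_loop; rewrite -{1}az -{1}bz Nab.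
- have [_ cb] := indexP b neq_bz.
  by apply: via_z Nxz _; rewrite cb -az.
- have [_ ca] := indexP a neq_az.
  have := via_z _ _ Nxz Nzy; rewrite (via_z (cycle_index a) _ _ Nzy); last by rewrite ca -bz.
  move/eqP; rewrite -(addn2 (cycle_index a)) -(addn2 (cycle_index x)) eqn_modDr => /eqP e.
  by rewrite -(addn1 (cycle_index a)) -(addn1 (cycle_index x)) -modnDml -e modnDml.
- have [_ ca] := indexP a neq_az; have [_ cb] := indexP b neq_bz.
  by apply: cycle_arc; rewrite ca cb.
Qed.

Lemma cycle_closed_succ z i0 : N (c i0) z -> N z (c i0.+1) ->
  forall i, bpow N s.+1 (c i) (c i).
Proof.
move=> Ni0z Nzi1 i; have [l [li_i0 lt_ls back]] := cycle_back i0 i.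
have to_i1 : bpow N (l + 2) (c i) (c i0.+1).
  by apply: bpow_trans li_i0 _; apply: (@bpow_trans _ _ 1 1 _ z); rewrite bpow1.
have back_to_i : c (i0.+1 + (s - l.+1)) = c i.
  apply: cycle_eq; rewrite -back -addnBA ?(ltnW lt_ls) // modnDml; congr (_ %% s); lia.
have -> : s.+1 = (l + 2) + (s - l.+1) by lia.
by apply: bpow_trans to_i1 _; rewrite -back_to_i cycle_walk.
Qed.

(* Both c a and c (a + d) reach c (a + d) in d * (s + 1) steps: the former walks d
   steps along the cycle and then around it d times, the latter uses its closed walk. *)
Lemma cycle_meet a d L : d * s.+1 <= L ->
  bpow N (d * s.+1) (c (a + d)) (c (a + d)) ->
  exists w, bpow N L (c a) w && bpow N L (c (a + d)) w.
Proof.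
move=> le_dL closed_ad; have [w adw] := bpow_out (L - d * s.+1) (c (a + d)).
exists w; apply/andP; split; last by rewrite -(subnKC le_dL); apply: bpow_trans closed_ad adw.
have to_ad : bpow N (d + d * s) (c a) (c (a + d)).
  by apply: bpow_trans (cycle_walk a d) _; apply: bpow_closedM; apply: cycle_closed.
have -> : L = (d + d * s) + (L - d * s.+1) by rewrite -mulnS subnKC.
exact: bpow_trans to_ad adw.
Qed.

Section AlmostSpanningCycle.
Variables (p : nat) (z : 'I_m).
Hypotheses (m_even : m = p.*2) (s_eq : s = m.-1) (off_cycle : ~: cycle_set = [set z]).

Lemma off_cycle_eq w : w \notin cycle_set -> w = z.
Proof. by rewrite -in_setC off_cycle => /set1P. Qed.

Lemma out_neighbor_on_cycle w : exists2 k, k < s & N w (c k).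
Proof.
case: (boolP (w \in cycle_set)) => [/cycle_indexP[_ cw]|/off_cycle_eq ->].
  exists ((cycle_index w).+1 %% s); first by rewrite ltn_pmod.
  by rewrite -cycle_mod -{1}cw.
have zNC : z \notin cycle_set by rewrite -in_setC off_cycle set11.
have [y Nzy neq_yz] := off_cycle_out_neighbor zNC.
have [lt_ys cy] : cycle_index y < s /\ c (cycle_index y) = y.
  by apply: cycle_indexP; apply: contraR neq_yz => /off_cycle_eq ->.
by exists (cycle_index y); rewrite // cy.
Qed.

Lemma cycle_closed_mul_succ d i : d <= p.-1 -> bpow N (d * s.+1) (c i) (c i).
Proof.
case: d => [|d] le_dp; first by rewrite mul0n bpow0.
have s_gt2 : 2 < s by rewrite s_eq m_even; lia.
have zNC : z \notin cycle_set by rewrite -in_setC off_cycle set11.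
have [i0 /andP[Ni0z Nzi1]] := cycle_detour s_gt2 off_cycle_eq zNC.
by apply: bpow_closedM; apply: cycle_closed_succ Ni0z Nzi1 i.
Qed.

(* Two cycle vertices are at most p - 1 apart in one of the two directions. *)
Lemma cycle_pair_meet a b : a < s -> b < s ->
  exists w, bpow N (p.-1 * m) (c a) w && bpow N (p.-1 * m) (c b) w.
Proof.
have le_L d : d <= p.-1 -> d * s.+1 <= p.-1 * m.
  by move=> le_dp; rewrite s_eq prednK ?leq_mul2r ?le_dp ?orbT // m_even; lia.
wlog le_ab : a b / a <= b => [W lt_as lt_bs|lt_as lt_bs].
  case: (leqP a b) => [le_ab|/ltnW le_ba]; first exact: W.
  by have [w baw] := W b a le_ba lt_bs lt_as; exists w; rewrite andbC.
case: (leqP (b - a) p.-1) => [le_d|lt_d].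
  by have := cycle_meet (le_L _ le_d) (cycle_closed_mul_succ (a + (b - a)) le_d); rewrite subnKC.
have le_d : a + s - b <= p.-1 by move: lt_d; rewrite s_eq m_even; lia.
have := cycle_meet (le_L _ le_d) (cycle_closed_mul_succ (b + (a + s - b)) le_d).
have -> : b + (a + s - b) = a + s by lia.
by rewrite c_periodic => -[w baw]; exists w; rewrite andbC.
Qed.

Lemma almost_spanning_out_sets_meet u v :
  exists w, bpow N (scrambling_bound m) u w && bpow N (scrambling_bound m) v w.
Proof.
have p_gt0 : 0 < p by have := ltn_ord z; lia.
have -> : scrambling_bound m = 1 + p.-1 * m.
  by rewrite m_even -(prednK p_gt0) scrambling_bound_even /=; nia.
have [a lt_as Nua] := out_neighbor_on_cycle u; have [b lt_bs Nvb] := out_neighbor_on_cycle v.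
have [w /andP[aw bw]] := cycle_pair_meet lt_as lt_bs.
by exists w; rewrite (bpow_trans _ aw) ?(bpow_trans _ bw) ?bpow1.
Qed.

End AlmostSpanningCycle.

Lemma shortest_cycle_out_sets_meet u v :
  exists w, bpow N (scrambling_bound m) u w && bpow N (scrambling_bound m) v w.
Proof.
case: (eqVneq u v) => [<-|neq_uv].
  by have [w Tuw] := bpow_out (scrambling_bound m) u; exists w; rewrite Tuw.
have m_gt1 : 1 < m.
  rewrite ltnNge; apply: contra neq_uv => le_m1; apply/eqP/ord_inj.
  by have := ltn_ord u; have := ltn_ord v; lia.
have lt_sm := cycle_length_lt m_gt1.
have [p [m_odd|m_even]] : exists p, m = p.*2.+1 \/ m = p.*2.
  by exists m./2; rewrite -{1 3}(odd_double_half m); case: (odd m); [left|right].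
  apply: out_sets_meet; have := card_out_set_odd u m_gt1 m_odd.
  have := card_out_set_odd v m_gt1 m_odd; lia.
case: (eqVneq s m.-1) => [s_eq|neq_s].
  have [z off_cycle] : exists z, ~: cycle_set = [set z].
    by apply/cards1P; have := cardsC cycle_set; rewrite card_cycle_set card_ord; lia.
  exact: almost_spanning_out_sets_meet m_even s_eq off_cycle u v.
case: p m_even => [|q] m_even; first by rewrite m_even in m_gt1.
by apply: even_out_sets_meet m_even _ neq_uv; lia.
Qed.

End ShortestCycle.

Lemma primitive_out_sets_meet u v :
  exists w, bpow N (scrambling_bound m) u w && bpow N (scrambling_bound m) v w.
Proof.
have [s [c [s_gt0 s_min c_step c_periodic]]] := exists_shortest_cycle u.
exact: shortest_cycle_out_sets_meet s_min c_step c_periodic u v.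
Qed.

End Primitive.

Lemma bpow_bmul_swap n b (A : bmat n b) (B : bmat b n) t i p q j :
  A i p -> bpow (bmul B A) t p q -> B q j -> bpow (bmul A B) t.+1 i j.
Proof.
elim: t q j => [|t IHt] q j Aip.
  by rewrite bpow0 => /eqP <- Bpj; rewrite bpow1 bmulE; apply/existsP; exists p; rewrite Aip.
rewrite bpowS => /existsP[q' /andP[tpq']]; rewrite bmulE => /existsP[l /andP[Bq'l Alq]] Bqj.
rewrite bpowS; apply/existsP; exists l; rewrite (IHt _ _ Aip tpq' Bq'l) /=.
by rewrite bmulE; apply/existsP; exists q; rewrite Alq.
Qed.

Section BooleanFactorization.
Variables (n b : nat) (A : bmat n b) (B : bmat b n).
Hypotheses (A_col : forall q, exists i, A i q) (B_row : forall q, exists j, B q j).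

Lemma all_ones_bmul_swap r : all_ones (bpow (bmul A B) r) -> all_ones (bpow (bmul B A) r.+1).
Proof.
move=> AB_full q q'; have [j Bqj] := B_row q; have [l Alq'] := A_col q'.
exact: bpow_bmul_swap Bqj (AB_full j l) Alq'.
Qed.

Lemma rows_scrambled_bmul_swap t : (forall i, exists p, A i p) ->
  (forall p p', exists w, bpow (bmul B A) t p w && bpow (bmul B A) t p' w) ->
  rows_scrambled (bpow (bmul A B) t.+1).
Proof.
move=> A_row BA_meet i i'; have [p Aip] := A_row i; have [p' Ai'p'] := A_row i'.
have [w /andP[tpw tp'w]] := BA_meet p p'; have [j Bwj] := B_row w.
by exists j; rewrite (bpow_bmul_swap Aip tpw Bwj) (bpow_bmul_swap Ai'p' tp'w Bwj).
Qed.

End BooleanFactorization.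

Lemma bfactors_drop m n b (M : bmat m n) (A : bmat m b.+1) (B : bmat b.+1 n) q :
  M = bmul A B -> (forall i j, ~~ (A i q && B q j)) -> bfactors b M.
Proof.
move=> M_AB q_unused.
exists [ffun i => fun k => A i (lift q k)], [ffun k => fun j => B (lift q k) j].
rewrite M_AB; apply/ffunP=> i; apply: functional_extensionality => j.
rewrite !bmulE; apply/existsP/existsP => [[k ABk]|[k]]; last by rewrite !ffunE; exists (lift q k).
case: (unliftP q k) ABk => [k' ->|->] ABk; first by exists k'; rewrite !ffunE.
by have := q_unused i j; rewrite ABk.
Qed.

Lemma boolean_rank_factor_used m n b (M : bmat m n) (A : bmat m b) (B : bmat b n) :
  nonzero M -> (forall b', 0 < b' -> b' < b -> ~ bfactors b' M) -> M = bmul A B ->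
  forall q, exists i j, A i q && B q j.
Proof.
move=> [i0 [j0 Mij0]] b_min M_AB q.
case: (boolP [exists i, exists j, A i q && B q j]) => [/existsP[i /existsP[j ABij]]|].
  by exists i, j.
move/existsPn=> q_unused'; have {q_unused'} q_unused i j : ~~ (A i q && B q j).
  by have /existsPn := q_unused' i; apply.
exfalso; move: A B q M_AB b_min q_unused; case: b => [|[|b]] A B q M_AB b_min q_unused.
- by case: q q_unused.
- move: Mij0; rewrite M_AB bmulE => /existsP[k]; rewrite (ord1 k) -(ord1 q).
  by rewrite (negbTE (q_unused _ _)).
- exact: b_min b.+1 isT (ltnSn _) (bfactors_drop M_AB q_unused).
Qed.

Theorem theorem2p3 (n : nat) (M : bmat n n) (b k : nat) :
  2 <= n -> primitive M -> nonzero M ->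
  is_boolean_rank M b -> is_scrambling_index M k ->
  k <= ((b.-1 ^ 2 + 1) + 1) %/ 2 + 1.
Proof.
move=> n_ge2 [r M_full] M_nz [_ [[A [B M_AB]] b_min]] [_ [_ k_min]].
have r_gt0 : 0 < r.
  by case: r M_full => // /(_ (Ordinal (ltnW n_ge2)) (Ordinal n_ge2)); rewrite bpow0.
have factor_used := boolean_rank_factor_used M_nz b_min M_AB.
have A_col q : exists i, A i q by have [i [j /andP[Aiq _]]] := factor_used q; exists i.
have B_row q : exists j, B q j by have [i [j /andP[_ Bqj]]] := factor_used q; exists j.
have A_row i : exists p, A i p.
  by have [j] := out_neighbor r_gt0 M_full i; rewrite M_AB bmulE => /existsP[p /andP[]]; exists p.
rewrite M_AB in M_full.
have BA_full := all_ones_bmul_swap A_col B_row M_full.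
have := rows_scrambled_bmul_swap B_row A_row (primitive_out_sets_meet (ltn0Sn r) BA_full).
rewrite -M_AB -addn1 => scrambled; rewrite leqNgt; apply/negP => lt_bound.
by apply: k_min lt_bound scrambled; rewrite addn1.
Qed.
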